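(* Let $R$ be a commutative domain of finite character with field of fractions $Q$, let $\Lambda$ be an $R$-algebra finitely generated as an $R$-module, and let $M,N,K$ be finitely generated right $\Lambda$-modules which are torsion-free as $R$-modules. Assume that $M_\mathfrak m$ is a direct summand of $N_\mathfrak m$ for every maximal ideal $\mathfrak m$ of $R$, and that $M\otimes_R Q$ is a direct summand of $K\otimes_R Q$ (as $\Lambda\otimes_R Q$-modules). Then $M$ is a direct summand of $N\oplus K$.
   Context: A commutative domain has finite character if every non-zero element lies in only finitely many maximal ideals. A module is torsion-free over $R$ if $M\to M\otimes_R Q$ is injective. *)

From Stdlib Require Import List.
From HB Require Import structures.
From mathcomp Require Import all_boot all_order all_algebra.
Set Implicit Arguments. Unset Strict Implicit. Unset Printing Implicit Defensive.
Import GRing.Theory.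
Local Open Scope ring_scope.

Section Ideals.
Variable R : comNzRingType.

Definition is_ideal (I : R -> Prop) : Prop :=
  I 0 /\ (forall x y, I x -> I y -> I (x + y)) /\ (forall r x, I x -> I (r * x)).

Definition is_maximal_ideal (m : R -> Prop) : Prop :=
  is_ideal m /\ ~ m 1 /\
  forall J : R -> Prop, is_ideal J -> (forall x, m x -> J x) ->
    J 1 \/ (forall x, J x <-> m x).

Definition finite_character : Prop :=
  forall x : R, x != 0 ->
    exists s : seq (R -> Prop),
      forall m, is_maximal_ideal m -> m x ->
        exists2 p, List.In p s & (forall y, m y <-> p y).
End Ideals.

(* An R-algebra is [L : algType R]; a right L-module is an [lmodType L^c]. *)
Section Modules.
Variables (R : comNzRingType) (L : algType R).

Definition fg_Rmodule : Prop :=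
  exists s : seq L, forall x : L,
    exists c : 'I_(size s) -> R, x = \sum_(i < size s) c i *: s`_i.

Variable M : lmodType (L^c).

Definition ractL (m : M) (l : L) : M := @GRing.scale (L^c) M l m.
Definition ractR (r : R) (m : M) : M := ractL m (r%:A).

Definition fg_right_module : Prop :=
  exists s : seq M, forall x : M,
    exists c : 'I_(size s) -> L, x = \sum_(i < size s) ractL s`_i (c i).

(* Concrete model of the localization S^{-1} M : pairs (m, s) with s in S,
   modulo (m,s) ~ (m',s') iff u (s' m - s m') = 0 for some u in S. *)
Definition loc_valid (S : R -> Prop) (x : M * R) : Prop := S x.2.
Definition loc_eq (S : R -> Prop) (x y : M * R) : Prop :=
  exists2 u, S u & ractR u (ractR y.2 x.1 - ractR x.2 y.1) = 0.
Definition loc_add (x y : M * R) : M * R :=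
  (ractR y.2 x.1 + ractR x.2 y.1, x.2 * y.2).
(* action of a fraction l/t of S^{-1}L on m/s *)
Definition loc_act (x : M * R) (l : L) (t : R) : M * R :=
  (ractL x.1 l, x.2 * t).

(* torsion-free over R: M -> M (x)_R Q = S^{-1}M (S = R \ {0}) is injective *)
Definition Rtorsionfree : Prop :=
  forall m m' : M, loc_eq (fun r => r != 0) (m, 1) (m', 1) -> m = m'.
End Modules.

(* F represents an S^{-1}L-linear map S^{-1}M -> S^{-1}N *)
Definition loc_linear (R : comNzRingType) (L : algType R) (M N : lmodType (L^c))
    (S : R -> Prop) (F : M * R -> N * R) : Prop :=
  (forall x, loc_valid S x -> loc_valid S (F x)) /\
  (forall x y, loc_valid S x -> loc_valid S y -> loc_eq S x y -> loc_eq S (F x) (F y)) /\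
  (forall x y, loc_valid S x -> loc_valid S y ->
       loc_eq S (F (loc_add x y)) (loc_add (F x) (F y))) /\
  (forall x l t, loc_valid S x -> S t ->
       loc_eq S (F (loc_act x l t)) (loc_act (F x) l t)).

Section LocMaps.
Variables (R : comNzRingType) (L : algType R) (M N : lmodType (L^c)).

Definition loc_summand (S : R -> Prop) : Prop :=
  exists (F : M * R -> N * R) (G : N * R -> M * R),
    [/\ loc_linear S F, loc_linear S G &
        forall x, loc_valid S x -> loc_eq S (G (F x)) x].
End LocMaps.

Definition is_summand (R : comNzRingType) (L : algType R) (M N : lmodType (L^c)) : Prop :=
  exists (f : {linear M -> N}) (g : {linear N -> M}), cancel f g.

From HB Require Import structures.
From Stdlib Require Import ClassicalEpsilon Classical FunctionalExtensionality.
From Stdlib Require Import PropExtensionality.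
From mathcomp Require Import all_boot all_order all_algebra.
From mathcomp Require Import ring.
From mathcomp Require classical_sets.
Set Implicit Arguments. Unset Strict Implicit. Unset Printing Implicit Defensive.
Import GRing.Theory.
Local Open Scope ring_scope.

(** Clearing denominators turns the local splittings into global
  L-linear maps: for every maximal ideal m some f : M -> N and g : N -> M
  satisfy g \o f = t id with t outside m, and some fK : M -> K, gK : K -> M
  satisfy gK \o fK = s id with s <> 0.  By finite character s lies in only
  finitely many maximal ideals p_1, ..., p_k.  Gluing the local maps with
  comaximal coefficients gives one a : M -> N that is split up to a unit at
  every p_i; the gluing step rests on Cayley-Hamilton: an endomorphism of the
  finitely generated R-module M that is congruent to a unit scalar modulo p
  has a left inverse up to a scalar outside p.  Finally the ideal of those c
  for which c id_M factors through (a, fK) : M -> N * K contains s and, for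
  each p_i, an element outside p_i; so it lies in no maximal ideal and
  contains 1, which is the required splitting. *)

Section RightAction.
Variables (R : comNzRingType) (L : algType R) (M : lmodType L^c).
Implicit Types (m : M) (l : L) (r : R).

Lemma ractLDm m m' l : ractL (m + m') l = ractL m l + ractL m' l.
Proof. by rewrite /ractL scalerDr. Qed.
Lemma ractLDl m l l' : ractL m (l + l') = ractL m l + ractL m l'.
Proof. by rewrite /ractL scalerDl. Qed.
Lemma ractLA m l l' : ractL (ractL m l) l' = ractL m (l * l').
Proof. by rewrite /ractL scalerA. Qed.
Lemma ractL1 m : ractL m 1 = m.
Proof. by rewrite /ractL scale1r. Qed.
Lemma ractL0m l : ractL (0 : M) l = 0.
Proof. by rewrite /ractL scaler0. Qed.
Lemma ractL0l m : ractL m 0 = 0.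
Proof. by rewrite /ractL scale0r. Qed.
Lemma ractLNm m l : ractL (- m) l = - ractL m l.
Proof. by rewrite /ractL scalerN. Qed.
Lemma ractLBm m m' l : ractL (m - m') l = ractL m l - ractL m' l.
Proof. by rewrite /ractL scalerBr. Qed.

Lemma ractRA r r' m : ractR r (ractR r' m) = ractR (r * r') m.
Proof. by rewrite /ractR ractLA mulr_algl scalerA mulrC. Qed.
Lemma ractR1 m : ractR 1 m = m.
Proof. by rewrite /ractR scale1r ractL1. Qed.
Lemma ractRDr r m m' : ractR r (m + m') = ractR r m + ractR r m'.
Proof. exact: ractLDm. Qed.
Lemma ractRDl r r' m : ractR (r + r') m = ractR r m + ractR r' m.
Proof. by rewrite /ractR scalerDl ractLDl. Qed.
Lemma ractR0 r : ractR r (0 : M) = 0.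
Proof. exact: ractL0m. Qed.
Lemma ractR0l m : ractR 0 m = 0.
Proof. by rewrite /ractR scale0r ractL0l. Qed.
Lemma ractRN r m : ractR r (- m) = - ractR r m.
Proof. exact: ractLNm. Qed.
Lemma ractRBr r m m' : ractR r (m - m') = ractR r m - ractR r m'.
Proof. exact: ractLBm. Qed.
Lemma ractRL r m l : ractR r (ractL m l) = ractL (ractR r m) l.
Proof. by rewrite /ractR !ractLA mulr_algl mulr_algr. Qed.
Lemma ractLZ m r l : ractL m (r *: l) = ractR r (ractL m l).
Proof. by rewrite ractRL /ractR ractLA mulr_algl. Qed.

Lemma ractR_sumr r I (s : seq I) (P : pred I) (F : I -> M) :
  ractR r (\sum_(i <- s | P i) F i) = \sum_(i <- s | P i) ractR r (F i).
Proof. exact: (big_morph _ (ractRDr r) (ractR0 r)). Qed.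
Lemma ractR_suml I (s : seq I) (P : pred I) (F : I -> R) m :
  ractR (\sum_(i <- s | P i) F i) m = \sum_(i <- s | P i) ractR (F i) m.
Proof. by apply: (big_morph (fun r => ractR r m) (fun a b => ractRDl a b m) (ractR0l m)). Qed.
Lemma ractL_suml l I (s : seq I) (P : pred I) (F : I -> M) :
  ractL (\sum_(i <- s | P i) F i) l = \sum_(i <- s | P i) ractL (F i) l.
Proof. by apply: (big_morph (fun m => ractL m l) (fun a b => ractLDm a b l) (ractL0m l)). Qed.

Definition Rmod : Type := M.
HB.instance Definition _ := GRing.Zmodule.on Rmod.
HB.instance Definition _ := GRing.Zmodule_isLmodule.Build R Rmod
  ractRA ractR1 ractRDr (fun v a b => ractRDl a b v).

Lemma ractRE r m : ractR r m = (r *: (m : Rmod) : M).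
Proof. by []. Qed.
End RightAction.

Section LLinear.
Variables (R : comNzRingType) (L : algType R).

Definition Llinear (U V : lmodType L^c) (f : U -> V) :=
  forall l y y', f (ractL y l + y') = ractL (f y) l + f y'.

Variables (U V W : lmodType L^c).

Section Theory.
Variable f : U -> V.
Hypothesis hf : Llinear f.

Lemma LlinearD y y' : f (y + y') = f y + f y'.
Proof. by rewrite -{1}[y]ractL1 hf ractL1. Qed.
Lemma Llinear0 : f 0 = 0.
Proof. by apply: (@addrI _ (f 0)); rewrite -LlinearD !addr0. Qed.
Lemma LlinearL y l : f (ractL y l) = ractL (f y) l.
Proof. by rewrite -[ractL y l]addr0 hf Llinear0 addr0. Qed.
Lemma LlinearR r y : f (ractR r y) = ractR r (f y).
Proof. exact: LlinearL. Qed.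
Lemma Llinear_sum I (s : seq I) (P : pred I) (F : I -> U) :
  f (\sum_(i <- s | P i) F i) = \sum_(i <- s | P i) f (F i).
Proof. exact: (big_morph f LlinearD Llinear0). Qed.
End Theory.

Lemma Llinear_comp (f : U -> V) (g : V -> W) :
  Llinear f -> Llinear g -> Llinear (g \o f).
Proof. by move=> hf hg l y y' /=; rewrite hf hg. Qed.

Lemma Llinear_iter (f : U -> U) i : Llinear f -> Llinear (iter i f).
Proof. by move=> hf; elim: i => [|i IH] l y y' //=; rewrite IH hf. Qed.

Lemma Llinear0f : Llinear (fun _ : U => 0 : V).
Proof. by move=> l y y'; rewrite ractL0m addr0. Qed.

Lemma LlinearDf (f g : U -> V) : Llinear f -> Llinear g -> Llinear (f \+ g).
Proof.
move=> hf hg l y y' /=; rewrite hf hg ractLDm.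
by rewrite -!addrA; congr (_ + _); rewrite addrCA.
Qed.

Lemma LlinearZf r (f : U -> V) : Llinear f -> Llinear (fun y => ractR r (f y)).
Proof. by move=> hf l y y'; rewrite hf ractRDr ractRL. Qed.

Lemma Llinear_pair (f : U -> V) (g : U -> W) :
  Llinear f -> Llinear g -> Llinear (fun y => (f y, g y) : V * W).
Proof. by move=> hf hg l y y'; rewrite hf hg. Qed.
End LLinear.

Definition Llinear_pack (R : comNzRingType) (L : algType R) (U V : lmodType L^c)
    (f : U -> V) (hf : Llinear f) : {linear U -> V} :=
  HB.pack f (GRing.isLinear.Build _ _ _ _ f hf).

Lemma is_summand_of_retraction (R : comNzRingType) (L : algType R)
    (U V : lmodType L^c) (a : U -> V) (d : V -> U) :
  Llinear a -> Llinear d -> cancel a d -> is_summand U V.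
Proof. by move=> ha hd ad; exists (Llinear_pack ha), (Llinear_pack hd). Qed.

Section LocalizationEquivalence.
Variables (R : comNzRingType) (L : algType R) (M : lmodType L^c) (S : R -> Prop).
Hypothesis SM : forall a b, S a -> S b -> S (a * b).
Implicit Types (x y z : M * R).

Lemma loc_eq_sym x y : loc_eq S x y -> loc_eq S y x.
Proof. by case=> u Su H; exists u => //; rewrite -opprB ractRN H oppr0. Qed.

Lemma loc_eq_trans x y z :
  loc_valid S y -> loc_eq S x y -> loc_eq S y z -> loc_eq S x z.
Proof.
case: x => x1 x2; case: y => y1 y2; case: z => z1 z2 /= Sy.
case=> u Su Hu; case=> w Sw Hw.
exists (u * w * y2); first by apply: SM => //; apply: SM.
move: Hu Hw; rewrite /= !ractRE => Hu Hw.
have -> : (u * w * y2) *: ((z2 *: (x1 : Rmod M)) - x2 *: (z1 : Rmod M)) =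
   (w * z2) *: (u *: (y2 *: (x1 : Rmod M) - x2 *: (y1 : Rmod M))) +
   (u * x2) *: (w *: (z2 *: (y1 : Rmod M) - y2 *: (z1 : Rmod M))).
  rewrite !scalerBr !scalerA.
  have -> : w * z2 * u * y2 = u * w * y2 * z2 by ring.
  have -> : u * x2 * w * y2 = u * w * y2 * x2 by ring.
  have -> : u * x2 * w * z2 = w * z2 * u * x2 by ring.
  by rewrite addrA subrK.
by rewrite Hu Hw !scaler0 addr0.
Qed.

Lemma loc_eq_add x x' y y' : loc_eq S x x' -> loc_eq S y y' ->
  loc_eq S (loc_add x y) (loc_add x' y').
Proof.
case: x => a p; case: x' => a' p'; case: y => b q; case: y' => b' q'.
case=> u Su Hu; case=> v Sv Hv; exists (u * v); first exact: SM.
move: Hu Hv; rewrite /= !ractRE => Hu Hv.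
have -> : (u * v) *: ((p' * q') *: (q *: (a : Rmod M) + p *: (b : Rmod M)) -
          (p * q) *: (q' *: (a' : Rmod M) + p' *: (b' : Rmod M))) =
   (v * q * q') *: (u *: (p' *: (a : Rmod M) - p *: (a' : Rmod M))) +
   (u * p * p') *: (v *: (q' *: (b : Rmod M) - q *: (b' : Rmod M))).
  rewrite !(scalerDr, scalerBr, scalerN, scalerA) ?opprD ?addrA.
  have -> : v * q * q' * u * p' = u * v * (p' * q') * q by ring.
  have -> : v * q * q' * u * p = u * v * (p * q) * q' by ring.
  have -> : u * p * p' * v * q' = u * v * (p' * q') * p by ring.
  have -> : u * p * p' * v * q = u * v * (p * q) * p' by ring.
  by congr (_ - _); rewrite addrAC.
by rewrite Hu Hv !scaler0 addr0.
Qed.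

Lemma loc_eq_act x x' l t :
  loc_eq S x x' -> loc_eq S (loc_act x l t) (loc_act x' l t).
Proof.
case: x => a p; case: x' => a' p'; case=> u Su /= Hu; exists u => //=.
rewrite !ractRL -ractLBm ractRL.
have -> : ractR (p' * t) a - ractR (p * t) a' = ractR t (ractR p' a - ractR p a').
  by rewrite ractRBr !ractRA ![t * _]mulrC.
by rewrite ractRA mulrC -ractRA Hu ractR0 ractL0m.
Qed.

Lemma loc_eq_expand (z : M) d e : S 1 -> loc_eq S (z, d) (ractR e z, e * d).
Proof. by exists 1 => //=; rewrite ractRA mulrC subrr ractR0. Qed.
End LocalizationEquivalence.

Lemma Rtorsionfree_ractR_eq0 (R : comNzRingType) (L : algType R)
    (N : lmodType L^c) (u : R) (z : N) :
  Rtorsionfree N -> u != 0 -> ractR u z = 0 -> z = 0.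
Proof. by move=> tfN u0 H; apply: tfN; exists u => //=; rewrite !ractR1 subr0. Qed.

Section ClearDenominators.
Variables (R : idomainType) (L : algType R) (M N : lmodType L^c) (S : R -> Prop).
Hypothesis S1 : S 1.
Hypothesis SM : forall a b, S a -> S b -> S (a * b).
Hypothesis Snz : forall r, S r -> r != 0.
Hypothesis tfN : Rtorsionfree N.
Variable F : M * R -> N * R.
Hypothesis linF : loc_linear S F.

Lemma loc_linear_valid y d : S d -> S (F (y, d)).2.
Proof. by case: linF => H _; apply: (H (y, d)). Qed.

(* F (0, 1) ~ F (0, 1) + F (0, 1), so torsion-freeness kills its numerator. *)
Lemma clear_denom0 D : S D -> loc_eq S (0, D) (F (0, 1)).
Proof.
move=> SD; case: linF => _ [_ [Fadd _]].
case E: (F (0, 1)) => [z0 d0].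
have Sd0 : S d0 by have := loc_linear_valid 0 S1; rewrite E.
have : loc_add (0 : M, 1) (0, 1) = (0, 1) by rewrite /loc_add /= ractR0 addr0 mulr1.
move: (Fadd (0, 1) (0, 1) S1 S1) => /[swap] ->; rewrite E /loc_add /= => -[u Su /=].
have -> : ractR (d0 * d0) z0 - ractR d0 (ractR d0 z0 + ractR d0 z0) =
          ractR (d0 * d0) (- z0).
  by rewrite ractRDr ractRA opprD addrA subrr sub0r ractRN.
rewrite ractRA => /(Rtorsionfree_ractR_eq0 tfN).
rewrite !mulf_neq0 ?Snz // => /(_ isT) /eqP; rewrite oppr_eq0 => /eqP ->.
by exists 1 => //=; rewrite !ractR0 subrr ractR0.
Qed.

Lemma clear_denomD a b za zb D : S D ->
  loc_eq S (za, D) (F (a, 1)) -> loc_eq S (zb, D) (F (b, 1)) ->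
  loc_eq S (za + zb, D) (F (a + b, 1)).
Proof.
move=> SD Ha Hb; case: linF => _ [_ [Fadd _]].
apply: (loc_eq_trans SM (y := (ractR D (za + zb), D * D))); first exact: SM.
  exact: loc_eq_expand.
apply: (loc_eq_trans SM (y := loc_add (F (a, 1)) (F (b, 1)))).
- by apply: SM; apply: loc_linear_valid.
- by rewrite /= ractRDr; apply: (loc_eq_add SM (x := (za, D)) (y := (zb, D))).
have -> : (a + b, 1) = loc_add (a, 1) (b, 1) by rewrite /loc_add /= !ractR1 mulr1.
by apply: loc_eq_sym; apply: (Fadd (a, 1) (b, 1)).
Qed.

Lemma clear_denomL y z D l : S D ->
  loc_eq S (z, D) (F (y, 1)) -> loc_eq S (ractL z l, D) (F (ractL y l, 1)).
Proof.
move=> SD H; case: linF => _ [_ [_ Fact]].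
apply: (loc_eq_trans SM (y := loc_act (F (y, 1)) l 1)).
- by apply: SM => //; apply: loc_linear_valid.
- have -> : (ractL z l, D) = loc_act (z, D) l 1 by rewrite /loc_act mulr1.
  exact: loc_eq_act.
have -> : (ractL y l, 1) = loc_act (y, 1) l 1 by rewrite /loc_act mulr1.
by apply: loc_eq_sym; apply: (Fact (y, 1)).
Qed.

(* A common denominator: the product of the denominators of the images of
   the generators of M. *)
Lemma clear_denom_exists : fg_right_module M ->
  exists2 D, S D & forall y, exists z, loc_eq S (z, D) (F (y, 1)).
Proof.
case=> s Hs.
pose den (i : 'I_(size s)) := (F (s`_i, 1)).2.
pose D := \prod_(i < size s) den i.
have SD : S D by apply: (big_ind S) => // i _; apply: loc_linear_valid.
exists D => // y.
have gen_num (i : 'I_(size s)) : exists z, loc_eq S (z, D) (F (s`_i, 1)).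
  pose e := \prod_(j < size s | j != i) den j.
  exists (ractR e (F (s`_i, 1)).1).
  have -> : D = e * den i by rewrite /D (bigD1 i) //= mulrC.
  by apply: loc_eq_sym; rewrite {1}[F _]surjective_pairing; apply: loc_eq_expand.
have [c ->] := Hs y.
apply: (big_ind (fun y => exists z, loc_eq S (z, D) (F (y, 1)))).
- by exists 0; apply: clear_denom0.
- by move=> a b [za Ha] [zb Hb]; exists (za + zb); apply: clear_denomD.
- by move=> i _; have [z Hz] := gen_num i; exists (ractL z (c i)); apply: clear_denomL.
Qed.

Lemma clear_denom_unique y z z' D : S D ->
  loc_eq S (z, D) (F (y, 1)) -> loc_eq S (z', D) (F (y, 1)) -> z = z'.
Proof.
move=> SD H1 H2.
have : loc_eq S (z, D) (z', D).
  apply: (loc_eq_trans SM (y := F (y, 1))) => //; first exact: loc_linear_valid.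
  exact: loc_eq_sym.
case=> u Su /=; rewrite -ractRBr ractRA => /(Rtorsionfree_ractR_eq0 tfN).
by rewrite mulf_neq0 ?Snz // => /(_ isT) /eqP; rewrite subr_eq0 => /eqP.
Qed.

Lemma loc_linear_clear_denominators : fg_right_module M ->
  exists (f : M -> N) (D : R),
    [/\ S D, Llinear f & forall y, loc_eq S (f y, D) (F (y, 1))].
Proof.
move=> /clear_denom_exists [D SD numer].
pose f y := proj1_sig (constructive_indefinite_description _ (numer y)).
have fP y : loc_eq S (f y, D) (F (y, 1)).
  by rewrite /f; case: constructive_indefinite_description.
exists f, D; split => // l y y'.
apply: (clear_denom_unique (y := ractL y l + y') SD); first exact: fP.
by apply: clear_denomD => //; apply: clear_denomL.
Qed.
End ClearDenominators.

Lemma loc_summand_retraction (R : idomainType) (L : algType R)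
    (M N : lmodType L^c) (S : R -> Prop) :
  S 1 -> (forall a b, S a -> S b -> S (a * b)) -> (forall r, S r -> r != 0) ->
  Rtorsionfree M -> Rtorsionfree N -> fg_right_module M -> fg_right_module N ->
  loc_summand M N S ->
  exists (f : M -> N) (g : N -> M) t,
    [/\ Llinear f, Llinear g, S t & forall y, g (f y) = ractR t y].
Proof.
move=> S1 SM Snz tfM tfN fgM fgN [F [G [linF linG GF]]].
have [f [D [SD flin fP]]] := loc_linear_clear_denominators S1 SM Snz tfN linF fgM.
have [g [D' [SD' glin gP]]] := loc_linear_clear_denominators S1 SM Snz tfM linG fgN.
exists f, g, (D' * D); split => //; first exact: SM.
move=> y; case: linG => Gv [Gresp [_ Gact]]; case: linF => Fv _.
(* g (f y) / D'D ~ G (f y / D) ~ G (F (y / 1)) ~ y / 1 *)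
have : loc_eq S (g (f y), D' * D) (y, 1).
  apply: (loc_eq_trans SM (y := loc_act (G (f y, 1)) 1 D)).
  - exact: SM (Gv (f y, 1) S1) SD.
  - have -> : (g (f y), D' * D) = loc_act (g (f y), D') 1 D by rewrite /loc_act ractL1.
    exact: loc_eq_act.
  apply: (loc_eq_trans SM (y := G (F (y, 1)))); first exact/Gv/Fv.
  - apply: (loc_eq_trans SM (y := G (f y, D))); first exact: Gv.
      have -> : (f y, D) = loc_act (f y, 1) 1 D by rewrite /loc_act ractL1 mul1r.
      by apply: loc_eq_sym; apply: Gact.
    by apply: Gresp => //; apply: Fv.
  exact: GF.
case=> u Su /=; rewrite ractR1 => Hu.
by apply/eqP; rewrite -subr_eq0; apply/eqP; apply: (Rtorsionfree_ractR_eq0 tfM (Snz _ Su)).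
Qed.

Section CayleyHamilton.
Variables (R : comNzRingType) (L : algType R) (M : lmodType L^c) (n : nat).
Variable xs : 'I_n.+1 -> M.
Hypothesis gen : forall y, exists c : 'I_n.+1 -> R, y = \sum_j ractR (c j) (xs j).
Variable sigma : M -> M.
Hypothesis slin : Llinear sigma.
Variable C : 'M[R]_n.+1.
Hypothesis sigmaE : forall j, sigma (xs j) = \sum_k ractR (C j k) (xs k).

Lemma iter_generators i j :
  iter i sigma (xs j) = \sum_k ractR ((C ^+ i) j k) (xs k).
Proof.
elim: i j => [|i IH] j /=.
  rewrite (bigD1 j) //= big1 ?addr0; first by rewrite expr0 mxE eqxx ractR1.
  by move=> k kj; rewrite expr0 mxE eq_sym (negbTE kj) ractR0l.
rewrite IH (Llinear_sum slin).
under [LHS]eq_bigr => k _ do rewrite (LlinearR slin) sigmaE ractR_sumr.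
rewrite exchange_big /=; apply: eq_bigr => l _.
rewrite exprSr -mulmxE mxE ractR_suml; apply: eq_bigr => k _.
by rewrite ractRA.
Qed.

Lemma horner_mx_generators (p : {poly R}) j :
  \sum_(i < size p) ractR p`_i (iter i sigma (xs j)) =
  \sum_k ractR (horner_mx C p j k) (xs k).
Proof.
rewrite -[in RHS](coefK p) poly_def linear_sum /=.
under [RHS]eq_bigr => k _ do rewrite summxE ractR_suml.
rewrite exchange_big /=; apply: eq_bigr => i _.
rewrite iter_generators ractR_sumr; apply: eq_bigr => k _.
by rewrite linearZ /= rmorphXn /= horner_mx_X mxE ractRA.
Qed.

Lemma char_poly_annihilates y :
  \sum_(i < size (char_poly C)) ractR (char_poly C)`_i (iter i sigma y) = 0.
Proof.
have [c ->] := gen y.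
have itlin i : Llinear (iter i sigma) by apply: Llinear_iter.
under eq_bigr => i _ do rewrite (Llinear_sum (itlin i)) ractR_sumr.
rewrite exchange_big /=; apply: big1 => j _.
under eq_bigr => i _ do rewrite (LlinearR (itlin i)) ractRA mulrC -ractRA.
rewrite -ractR_sumr horner_mx_generators Cayley_Hamilton.
by rewrite big1 ?ractR0 // => k _; rewrite mxE ractR0l.
Qed.

Lemma Llinear_left_inverse_char_poly : exists rho : M -> M,
  Llinear rho /\ forall y, rho (sigma y) = ractR (char_poly C)`_0 y.
Proof.
pose chi := char_poly C.
pose rho y := - \sum_(i < n.+1) ractR chi`_i.+1 (iter i sigma y).
exists rho; split.
  move=> l y y'; rewrite /rho ractLNm -opprD; congr (- _).
  rewrite ractL_suml -big_split /=; apply: eq_bigr => i _.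
  by rewrite (Llinear_iter i slin) ractRDr ractRL.
move=> y; have := char_poly_annihilates y.
rewrite size_char_poly big_ord_recl /= => /eqP.
rewrite addr_eq0 => /eqP ->; rewrite /rho; congr (- _).
by apply: eq_bigr => i _; rewrite -iterSr /bump /= add0n add1n.
Qed.
End CayleyHamilton.

Lemma horner_factor0 (R : comNzRingType) (p : {poly R}) b :
  exists q, p.[b] = p.[0] + b * q.
Proof.
elim/poly_ind: p => [|p c _]; first by exists 0; rewrite !horner0 mulr0 addr0.
by exists p.[b]; rewrite !hornerE addrC mulrC.
Qed.

Section MaximalIdeals.
Variables (R : comNzRingType) (m : R -> Prop).
Hypothesis mmax : is_maximal_ideal m.

Lemma max_ideal_ideal : is_ideal m. Proof. by case: mmax. Qed.
Lemma max_ideal0 : m 0. Proof. by case: max_ideal_ideal. Qed.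
Lemma max_idealD x y : m x -> m y -> m (x + y).
Proof. by case: max_ideal_ideal => _ []; auto. Qed.
Lemma max_idealMl r x : m x -> m (r * x).
Proof. by case: max_ideal_ideal => _ []; auto. Qed.
Lemma max_idealMr r x : m x -> m (x * r).
Proof. by rewrite mulrC; apply: max_idealMl. Qed.
Lemma max_idealB x y : m x -> m y -> m (x - y).
Proof. by move=> mx my; apply: max_idealD => //; rewrite -mulN1r; apply: max_idealMl. Qed.
Lemma max_ideal_neq1 : ~ m 1. Proof. by case: mmax => _ []. Qed.

Lemma max_ideal_1B x : m x -> ~ m (1 - x).
Proof. by move=> mx m1x; apply: max_ideal_neq1; rewrite -(subrK x 1); apply: max_idealD. Qed.

Lemma max_ideal_compl_neq0 r : ~ m r -> r != 0.
Proof. by move=> mr; apply/eqP => r0; apply: mr; rewrite r0; apply: max_ideal0. Qed.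

Lemma max_ideal_prime a b : m (a * b) -> m a \/ m b.
Proof.
move=> mab; case: (classic (m a)) => ma; [by left | right].
pose J x := exists y z, m y /\ x = y + z * a.
have JI : is_ideal J.
  split; first by exists 0, 0; split; [exact: max_ideal0 | rewrite mul0r addr0].
  split.
    move=> x x' [y [z [my ->]]] [y' [z' [my' ->]]].
    exists (y + y'), (z + z'); split; first exact: max_idealD.
    by rewrite mulrDl; ring.
  move=> r x [y [z [my ->]]]; exists (r * y), (r * z); split; first exact: max_idealMl.
  by ring.
case: mmax => _ [_ /(_ J JI)] [].
- by move=> x mx; exists x, 0; rewrite mul0r addr0.
- case=> y [z [my E]].
  have -> : b = y * b + z * (a * b) by rewrite mulrA -mulrDl -E mul1r.
  by apply: max_idealD; [apply: max_idealMr | apply: max_idealMl].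
by move=> H; exfalso; apply/ma/H; exists 0, 1; split; [exact: max_ideal0 | rewrite mul1r add0r].
Qed.

Lemma max_idealM_compl a b : ~ m a -> ~ m b -> ~ m (a * b).
Proof. by move=> ma mb /max_ideal_prime []. Qed.

Lemma max_ideal_exp a k : m (a ^+ k) -> m a.
Proof.
elim: k => [|k IH]; first by rewrite expr0 => /max_ideal_neq1.
by rewrite exprS => /max_ideal_prime [//|]; apply: IH.
Qed.

(* The matrix is v + X e evaluated at X = b, so its determinant is congruent
   modulo b to the value v ^+ n.+1 at X = 0. *)
Lemma det_scalar_perturb n (v b : R) (e : 'I_n.+1 -> 'I_n.+1 -> R) :
  ~ m v -> m b -> ~ m (\det (\matrix_(j, k) (v * (j == k)%:R + b * e j k))).
Proof.
move=> mv mb.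
pose P : 'M[{poly R}]_n.+1 :=
  \matrix_(j, k) ((v * (j == k)%:R)%:P + 'X * (e j k)%:P).
have Pb : \matrix_(j, k) (v * (j == k)%:R + b * e j k) = map_mx (horner_eval b) P.
  by apply/matrixP => j k; rewrite !mxE /= horner_evalE !hornerE.
have P0 : (v%:M : 'M[R]_n.+1) = map_mx (horner_eval 0) P.
  apply/matrixP => j k; rewrite !mxE /= horner_evalE !hornerE.
  by case: (j == k); rewrite ?mulr1 ?mulr0 ?mul0r ?addr0.
have [q Hq] := horner_factor0 (\det P) b.
rewrite Pb det_map_mx /= horner_evalE Hq -horner_evalE -det_map_mx -P0 det_scalar.
move=> H; apply: mv; apply: (@max_ideal_exp _ n.+1).
rewrite -(addrK (b * q) (v ^+ n.+1)).
by apply: max_idealB => //; apply: max_idealMr.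
Qed.
End MaximalIdeals.

(* In the basis xs the matrix of sigma = v + b tau is v 1 + b E, whose
   characteristic polynomial has constant coefficient +-det, a unit mod m. *)
Lemma Llinear_left_inverse_mod_max_ideal (R : comNzRingType) (L : algType R)
    (M : lmodType L^c) (n : nat) (xs : 'I_n.+1 -> M)
    (gen : forall y, exists c : 'I_n.+1 -> R, y = \sum_j ractR (c j) (xs j))
    (m : R -> Prop) (sigma tau : M -> M) (v b : R) :
  is_maximal_ideal m -> Llinear sigma -> ~ m v -> m b ->
  (forall y, sigma y = ractR v y + ractR b (tau y)) ->
  exists rho c, [/\ Llinear rho, ~ m c & forall y, rho (sigma y) = ractR c y].
Proof.
move=> mmax slin mv mb sigmaE.
pose e j := proj1_sig (constructive_indefinite_description _ (gen (tau (xs j)))).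
have eP j : tau (xs j) = \sum_k ractR (e j k) (xs k).
  by rewrite /e; case: constructive_indefinite_description.
pose C := \matrix_(j, k) (v * (j == k)%:R + b * e j k).
have CE j : sigma (xs j) = \sum_k ractR (C j k) (xs k).
  rewrite sigmaE eP ractR_sumr (bigD1 j) //= [X in _ = X](bigD1 j) //= !mxE eqxx mulr1.
  rewrite ractRDl addrA ractRA; congr (_ + _); apply: eq_bigr => k kj.
  by rewrite !mxE eq_sym (negbTE kj) mulr0 add0r ractRA.
have [rho [rlin rhoE]] := Llinear_left_inverse_char_poly gen slin CE.
exists rho, (char_poly C)`_0; split => //.
rewrite char_poly_det => H; apply: (det_scalar_perturb mmax (e := e) mv mb).
have -> : \det (\matrix_(j, k) (v * (j == k)%:R + b * e j k)) =
          (-1) ^+ n.+1 * ((-1) ^+ n.+1 * \det C).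
  by rewrite mulrA -exprMn mulrNN mulr1 expr1n mul1r.
exact: max_idealMl.
Qed.

Lemma fg_right_module_Rgenerated (R : comNzRingType) (L : algType R)
    (M : lmodType L^c) :
  fg_Rmodule L -> fg_right_module M ->
  exists n (xs : 'I_n.+1 -> M),
    forall y, exists c : 'I_n.+1 -> R, y = \sum_j ractR (c j) (xs j).
Proof.
case=> sL HL [sM HM].
pose gs := [seq ractL a l | a <- sM, l <- sL].
(* A 0 is prepended so that the index type is of the form 'I_n.+1. *)
pose xs (j : 'I_(size gs).+1) := (0 :: gs)`_j.
exists (size gs), xs.
pose span y := exists c : 'I_(size gs).+1 -> R, y = \sum_j ractR (c j) (xs j).
have span0 : span 0 by exists (fun _ => 0); rewrite big1 // => j _; rewrite ractR0l.
have spanD y y' : span y -> span y' -> span (y + y').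
  case=> c -> [c' ->]; exists (fun j => c j + c' j).
  by rewrite -big_split; apply: eq_bigr => j _; rewrite ractRDl.
have spanR r y : span y -> span (ractR r y).
  case=> c ->; exists (fun j => r * c j).
  by rewrite ractR_sumr; apply: eq_bigr => j _; rewrite ractRA.
have span_gs g : g \in gs -> span g.
  move=> gin; have ilt : ((index g gs).+1 < (size gs).+1)%N by rewrite ltnS index_mem.
  exists (fun j => (j == Ordinal ilt)%:R).
  rewrite (bigD1 (Ordinal ilt)) //= big1 ?addr0.
    by rewrite eqxx ractR1 /xs /= nth_index.
  by move=> j /negbTE ->; rewrite ractR0l.
move=> y; have [c ->] := HM y.
apply: (big_ind span) => // i _.
have [e ->] := HL (c i).
rewrite (big_morph (ractL sM`_i) (ractLDl sM`_i) (ractL0l sM`_i)).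
apply: (big_ind span) => // k _.
by rewrite ractLZ; apply/spanR/span_gs/allpairs_f; apply: mem_nth.
Qed.

Section Krull.
Import classical_sets.
Local Open Scope classical_set_scope.
Variables (R : comNzRingType) (I : R -> Prop).

Definition proper_ideal_over (X : set R) :=
  is_ideal X /\ ~ X 1 /\ forall x, I x -> X x.

(* The empty set is admitted so that the empty chain has an upper bound. *)
Let candidate (X : set R) := proper_ideal_over X \/ X = set0.

Lemma candidate_chain_bigcup (F : set (set R)) : F `<=` candidate ->
  total_on F subset -> candidate (\bigcup_(X in F) X).
Proof.
move=> Fcand Ftot.
have [[X0 [FX0 [x0 X0x0]]] | Fempty] :=
  classic (exists X, F X /\ exists x, X x); last first.
  by right; apply/seteqP; split => // x [X FX Xx]; apply: Fempty; exists X; split => //; exists x.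
have Fproper X y : F X -> X y -> proper_ideal_over X.
  by move=> FX Xy; case: (Fcand X FX) => // Xempty; move: Xy; rewrite Xempty.
have [[X0zero _] [_ IX0]] := Fproper X0 x0 FX0 X0x0.
left; split; last split.
- split; first by exists X0.
  split.
    move=> x y [X FX Xx] [Y FY Yy].
    have [XY | YX] := Ftot X Y FX FY.
      by exists Y => //; have [[_ [YD _]] _] := Fproper Y y FY Yy; apply: YD => //; apply: XY.
    by exists X => //; have [[_ [XD _]] _] := Fproper X x FX Xx; apply: XD => //; apply: YX.
  by move=> r x [X FX Xx]; exists X => //; have [[_ [_ XM]] _] := Fproper X x FX Xx; apply: XM.
- by case=> X FX X1; have [_ [XI1 _]] := Fproper X 1 FX X1.
- by move=> x Ix; exists X0 => //; apply: IX0.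
Qed.

Lemma exists_max_ideal_over : is_ideal I -> ~ I 1 ->
  exists m, is_maximal_ideal m /\ forall x, I x -> m x.
Proof.
move=> II nI1.
have [A [Acand Amax]] := Zorn_bigcup candidate_chain_bigcup.
case: Acand => [[AI [nA1 IA]] | A0]; last first.
  exfalso; apply: (Amax I); last by left.
  rewrite A0; split => // E; case: II => I0 _; by have := E 0 I0.
exists A; split => //; split => //; split => // J JI AJ.
have [|nJ1] := classic (J 1); first by left.
right => x; split; last exact: AJ.
move=> Jx; apply: NNPP => nAx; apply: (Amax J).
  by split => // E; apply: nAx; apply: E.
by left; split => //; split => // y Iy; apply/AJ/IA.
Qed.
End Krull.

Section Comaximal.
Variable R : comNzRingType.

Lemma max_ideals_comaximal (p q : R -> Prop) :
  is_maximal_ideal p -> is_maximal_ideal q -> ~ (forall x, q x <-> p x) ->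
  exists z, q z /\ p (1 - z).
Proof.
move=> pmax qmax nqp.
pose J x := exists y z, [/\ p y, q z & x = y + z].
have JI : is_ideal J.
  split; first by exists 0, 0; split; rewrite ?addr0 //; apply: max_ideal0.
  split.
    move=> x x' [y [z [py qz ->]]] [y' [z' [py' qz' ->]]].
    exists (y + y'), (z + z'); split; [exact: max_idealD | exact: max_idealD | ].
    by rewrite addrACA.
  move=> r x [y [z [py qz ->]]]; exists (r * y), (r * z).
  by split; [apply: max_idealMl | apply: max_idealMl | rewrite mulrDr].
case: (qmax) => _ [_ /(_ J JI)] [].
- by move=> x qx; exists 0, x; split; rewrite ?add0r //; apply: max_ideal0.
- by case=> y [z [py qz E]]; exists z; split => //; rewrite E addrK.
move=> Jq; exfalso.
case: (pmax) => _ [_ /(_ q (max_ideal_ideal qmax))] [].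
- by move=> x px; apply/Jq; exists x, 0; split; rewrite ?addr0 //; apply: max_ideal0.
- exact: max_ideal_neq1.
- by move=> qp; apply: nqp => x; rewrite qp.
Qed.

Lemma max_ideal_separating_element (p : R -> Prop) (ps : seq (R -> Prop)) :
  is_maximal_ideal p ->
  (forall q, List.In q ps -> is_maximal_ideal q -> ~ (forall x, q x <-> p x)) ->
  exists b, (forall q, List.In q ps -> is_maximal_ideal q -> q b) /\ p (1 - b).
Proof.
move=> pmax; elim: ps => [|q ps IH] Hps.
  by exists 1; split => //; rewrite subrr; apply: max_ideal0.
have [b [Hb pb]] := IH (fun q' q'in => Hps q' (or_intror q'in)).
have [qmax | nqmax] := classic (is_maximal_ideal q); last first.
  by exists b; split => // q' [<- // | ]; apply: Hb.
have nqp := Hps q (or_introl erefl) qmax.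
have [z [qz pz]] := max_ideals_comaximal pmax qmax nqp.
exists (z * b); split.
  move=> q' [<- _ | q'in q'max]; first exact: max_idealMr.
  exact: (max_idealMl q'max _ (Hb q' q'in q'max)).
rewrite (_ : 1 - z * b = (1 - z) + z * (1 - b)); last by rewrite mulrBr mulr1 addrA subrK.
by apply: max_idealD => //; apply: max_idealMl.
Qed.
End Comaximal.

Section Gluing.
Variables (R : comNzRingType) (L : algType R) (M N : lmodType L^c) (n : nat).
Variable xs : 'I_n.+1 -> M.
Hypothesis gen : forall y, exists c : 'I_n.+1 -> R, y = \sum_j ractR (c j) (xs j).

Definition splits_at (a : M -> N) (m : R -> Prop) :=
  exists (d : N -> M) c, [/\ Llinear d, ~ m c & forall y, d (a y) = ractR c y].

Lemma splits_at_ext a (m p : R -> Prop) :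
  (forall x, m x <-> p x) -> splits_at a m -> splits_at a p.
Proof. by move=> mp [d [c [dlin mc dE]]]; exists d, c; split => // /mp. Qed.

Lemma splits_at_perturb m (a a1 a2 : M -> N) u w :
  is_maximal_ideal m -> Llinear a1 -> Llinear a2 -> splits_at a1 m ->
  ~ m u -> m w -> (forall y, a y = ractR u (a1 y) + ractR w (a2 y)) ->
  splits_at a m.
Proof.
move=> mmax l1 l2 [d1 [c1 [d1lin mc1 d1E]]] mu mw aE.
have alin : Llinear a.
  move=> l y y'; rewrite !aE.
  exact: (LlinearDf (LlinearZf u l1) (LlinearZf w l2)).
have d1aE y : d1 (a y) = ractR (u * c1) y + ractR w (d1 (a2 y)).
  by rewrite aE (LlinearD d1lin) !(LlinearR d1lin) d1E ractRA.
have [rho [c [rlin mc rhoE]]] := Llinear_left_inverse_mod_max_ideal gen mmax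
  (Llinear_comp alin d1lin) (max_idealM_compl mmax mu mc1) mw d1aE.
by exists (rho \o d1), c; split => //; apply: Llinear_comp.
Qed.

Lemma glue_splittings (ps : seq (R -> Prop)) :
  (forall p, is_maximal_ideal p -> exists2 f : M -> N, Llinear f & splits_at f p) ->
  exists a : M -> N, Llinear a /\
    forall p, List.In p ps -> is_maximal_ideal p -> splits_at a p.
Proof.
move=> local; elim: ps => [|p ps [a1 [l1 a1split]]].
  by exists (fun _ => 0); split => //; apply: Llinear0f.
have [[pmax pna1] | ] := classic (is_maximal_ideal p /\ ~ splits_at a1 p); last first.
  move=> H; exists a1; split => // q [<- qmax | ]; last exact: a1split.
  by apply: NNPP => nq; apply: H.
have [f2 l2 [g2 [t2 [g2lin pt2 g2E]]]] := local p pmax.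
have [b [qb pb]] := max_ideal_separating_element (ps := ps) pmax
  (fun q qin qmax qp => pna1 (splits_at_ext qp (a1split q qin qmax))).
exists (fun y => ractR (1 - b) (a1 y) + ractR b (f2 y)); split.
  exact: (LlinearDf (LlinearZf _ l1) (LlinearZf _ l2)).
move=> q [<- _ | qin qmax].
  apply: (splits_at_perturb (a1 := f2) (a2 := a1) (u := b) (w := 1 - b)) => //.
  - by exists g2, t2; split.
  - by move=> pb'; apply: (max_ideal_1B pmax pb').
  - by move=> y; rewrite addrC.
apply: (splits_at_perturb (a1 := a1) (a2 := f2) (u := 1 - b) (w := b)) => //.
- exact: a1split.
- by apply: (max_ideal_1B qmax); apply: qb.
- exact: qb.
Qed.
End Gluing.

Lemma splits_at_local (R : idomainType) (L : algType R) (M N : lmodType L^c)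
    (m : R -> Prop) :
  is_maximal_ideal m -> Rtorsionfree M -> Rtorsionfree N ->
  fg_right_module M -> fg_right_module N -> loc_summand M N (fun r => ~ m r) ->
  exists2 f : M -> N, Llinear f & splits_at f m.
Proof.
move=> mmax tfM tfN fgM fgN locMN.
have [f [g [t [flin glin mt gfE]]]] := loc_summand_retraction (max_ideal_neq1 mmax)
  (max_idealM_compl mmax) (max_ideal_compl_neq0 mmax) tfM tfN fgM fgN locMN.
by exists f => //; exists g, t.
Qed.

Section FactorIdeal.
Variables (R : comNzRingType) (L : algType R) (M N K : lmodType L^c).
Variables (a : M -> N) (b : M -> K).

Definition factor_ideal (c : R) := exists (d : N -> M) (e : K -> M),
  [/\ Llinear d, Llinear e & forall y, d (a y) + e (b y) = ractR c y].

Lemma factor_ideal_ideal : is_ideal factor_ideal.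
Proof.
split.
  exists (fun _ => 0), (fun _ => 0); split; try exact: Llinear0f.
  by move=> y; rewrite addr0 ractR0l.
split.
  move=> x y [d [e [dlin elin dE]]] [d' [e' [dlin' elin' dE']]].
  exists (d \+ d'), (e \+ e'); split; try exact: LlinearDf.
  by move=> z; rewrite ractRDl -dE -dE' addrACA.
move=> r x [d [e [dlin elin dE]]].
exists (fun z => ractR r (d z)), (fun z => ractR r (e z)); split; try exact: LlinearZf.
by move=> z; rewrite -ractRDr dE ractRA.
Qed.

Lemma factor_ideal1 :
  (forall m, is_maximal_ideal m -> exists2 c, factor_ideal c & ~ m c) ->
  factor_ideal 1.
Proof.
move=> avoid; apply: NNPP => n1.
have [m [mmax mI]] := exists_max_ideal_over factor_ideal_ideal n1.
by have [c /mI mc] := avoid m mmax.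
Qed.

Lemma is_summand_of_factor_ideal1 : Llinear a -> Llinear b ->
  factor_ideal 1 -> is_summand M (N * K)%type.
Proof.
move=> alin blin [d [e [dlin elin dE]]].
apply: (is_summand_of_retraction (a := fun y => (a y, b y))
                                 (d := fun z => d z.1 + e z.2)).
- exact: Llinear_pair.
- by apply: LlinearDf; apply: Llinear_comp.
by move=> y; rewrite /= dE ractR1.
Qed.
End FactorIdeal.

Theorem mainTheorem18 (R : idomainType) (L : algType R)
    (M N K : lmodType (L^c)) :
  finite_character R ->
  fg_Rmodule L ->
  fg_right_module M -> fg_right_module N -> fg_right_module K ->
  Rtorsionfree M -> Rtorsionfree N -> Rtorsionfree K ->
  (forall m : R -> Prop, is_maximal_ideal m ->
     loc_summand M N (fun r => ~ m r)) ->
  loc_summand M K (fun r => r != 0%R) ->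
  is_summand M (N * K)%type.
Proof.
move=> fc fgL fgM fgN fgK tfM tfN tfK locN locK.
have [fK [gK [s [fKlin gKlin s0 gKE]]]] := loc_summand_retraction (oner_neq0 R)
  (@mulf_neq0 R) (fun r r0 => r0) tfM tfK fgM fgK locK.
have [n [xs gen]] := fg_right_module_Rgenerated fgL fgM.
have [ps sps] := fc s s0.
have [a [alin asplit]] := glue_splittings gen ps
  (fun m mmax => splits_at_local mmax tfM tfN fgM fgN (locN m mmax)).
apply: (is_summand_of_factor_ideal1 alin fKlin); apply: factor_ideal1 => m mmax.
have [ms | nms] := classic (m s); last first.
  exists s => //; exists (fun _ => 0), gK; split => //; first exact: Llinear0f.
  by move=> y; rewrite add0r gKE.
have [p pin mp] := sps m mmax ms.
have mpE : m = p.
  by apply: functional_extensionality => x; apply: propositional_extensionality.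
subst p; have [d [c [dlin mc dE]]] := asplit m pin mmax.
exists c => //; exists d, (fun _ => 0); split => //; first exact: Llinear0f.
by move=> y; rewrite addr0 dE.
Qed.
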